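(* Let $A$ be a right Ext-finite connected $\mathbb{Z}$-algebra and let $T\in{\sf Gr}\,A$ be a torsion module. Then $\operatorname{R}^i\tau(T)=0$ for all $i>0$.
   Context: $k$ is a field. A $\mathbb{Z}$-algebra $A$ is a $k$-linear category with objects indexed by $\mathbb{Z}$; $A_{ij}=\operatorname{Hom}(\mathcal{O}_j,\mathcal{O}_i)$, $A=\bigoplus A_{ij}$ with composition as multiplication, $e_i\in A_{ii}$ the identity. ${\sf Gr}\,A$ is the category of graded right modules $\bigoplus M_i$ ($M_i\times A_{ij}\to M_j$). $A$ is connected if $A_{ij}=0$ for $i>j$ and each $A_{ii}$ is a division ring over $k$; $A_{\ge1}=\bigoplus_{j>i}A_{ij}$. A minimal free resolution of $M\in{\sf Gr}\,A$ is an exact $\cdots\to F_1\xrightarrow{\psi_1}F_0\to M\to0$ with $F_i$ direct sums of modules $e_jA$ and $\operatorname{im}\psi_i\subseteq F_{i-1}A_{\ge1}$. $A$ is right Ext-finite if it is connected and each $e_iA/(e_iA)_{\ge i+1}$ has a minimal free resolution whose terms are finite direct sums of modules $e_lA$. A module is torsion if each of its elements generates a submodule $N$ with $N_n=0$ for $n\gg0$; $\tau:{\sf Gr}\,A\to{\sf Gr}\,A$ sends a module to its largest torsion submodule, and $\operatorname{R}^i\tau$ are its right derived functors. *)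

From HB Require Import structures.
From mathcomp Require Import all_boot all_order all_algebra.
Set Implicit Arguments. Unset Strict Implicit. Unset Printing Implicit Defensive.
Import Order.TTheory GRing.Theory Num.Theory.
Local Open Scope ring_scope.

(* Z-algebras over a field k: a k-linear category with objects O_i,    *)
(* i : int.  Ahom i j = A_{ij} = Hom(O_j, O_i); multiplication          *)
(* A_{ij} x A_{jl} -> A_{il} is composition; Aunit i = e_i.            *)
Record zalg (k : fieldType) := ZAlg {
  Ahom : int -> int -> lmodType k;
  Amul : forall i j l : int, Ahom i j -> Ahom j l -> Ahom i l;
  Aunit : forall i : int, Ahom i i;
  Amul_addl : forall i j l (a a' : Ahom i j) (b : Ahom j l),
      Amul (a + a') b = Amul a b + Amul a' b;
  Amul_addr : forall i j l (a : Ahom i j) (b b' : Ahom j l),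
      Amul a (b + b') = Amul a b + Amul a b';
  Amul_scalel : forall i j l (c : k) (a : Ahom i j) (b : Ahom j l),
      Amul (c *: a) b = c *: Amul a b;
  Amul_scaler : forall i j l (c : k) (a : Ahom i j) (b : Ahom j l),
      Amul a (c *: b) = c *: Amul a b;
  AmulA : forall i j l m (a : Ahom i j) (b : Ahom j l) (c : Ahom l m),
      Amul (Amul a b) c = Amul a (Amul b c);
  Amul1l : forall i j (a : Ahom i j), Amul (Aunit i) a = a;
  Amul1r : forall i j (a : Ahom i j), Amul a (Aunit j) = a
}.
Arguments Amul {k} z {i j l} : rename.
Arguments Aunit {k} z i : rename.

Definition connected_zalg (k : fieldType) (A : zalg k) : Prop :=
  (forall (i j : int) (a : Ahom A i j), j < i -> a = 0) /\
  (forall (i : int) (a : Ahom A i i), a != 0 ->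
     exists b : Ahom A i i, Amul A a b = Aunit A i /\ Amul A b a = Aunit A i).

(* (The k-vector space structure of M_i is induced by k e_i.)           *)
Record gmodD (k : fieldType) (A : zalg k) := GModD {
  Mc : int -> zmodType;
  Mact : forall i j : int, Mc i -> Ahom A i j -> Mc j
}.
Arguments Mc {k A} M i : rename.
Arguments Mact {k A} M {i j} : rename.

Definition is_gmod (k : fieldType) (A : zalg k) (M : gmodD A) : Prop :=
  (forall i j (x x' : Mc M i) (a : Ahom A i j),
      Mact M (x + x') a = Mact M x a + Mact M x' a) /\
  (forall i j (x : Mc M i) (a a' : Ahom A i j),
      Mact M x (a + a') = Mact M x a + Mact M x a') /\
  (forall i j l (x : Mc M i) (a : Ahom A i j) (b : Ahom A j l),
      Mact M (Mact M x a) b = Mact M x (Amul A a b)) /\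
  (forall i (x : Mc M i), Mact M x (Aunit A i) = x).

Unset Implicit Arguments.
Record ghom (k : fieldType) (A : zalg k) (M N : gmodD A) := GHom {
  hfun : forall i : int, Mc M i -> Mc N i;
  hfun_add : forall i (x y : Mc M i), hfun i (x + y) = hfun i x + hfun i y;
  hfun_act : forall i j (x : Mc M i) (a : Ahom A i j),
      hfun j (Mact M x a) = Mact N (hfun i x) a
}.
Set Implicit Arguments.
Arguments ghom {k A} M N : rename.
Arguments GHom {k A M N} hfun _ _ : rename.
Arguments hfun {k A M N} f i : rename.

Definition hom_mono (k : fieldType) (A : zalg k) (M N : gmodD A)
  (f : ghom M N) : Prop := forall i (x y : Mc M i), hfun f i x = hfun f i y -> x = y.

Definition hom_epi (k : fieldType) (A : zalg k) (M N : gmodD A)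
  (f : ghom M N) : Prop := forall i (y : Mc N i), exists x, hfun f i x = y.

Definition exact_at (k : fieldType) (A : zalg k) (M N P : gmodD A)
  (f : ghom M N) (g : ghom N P) : Prop :=
  forall i (y : Mc N i), hfun g i y = 0 <-> exists x, hfun f i x = y.

Definition injective_gmod (k : fieldType) (A : zalg k) (I : gmodD A) : Prop :=
  forall (X Y : gmodD A), is_gmod X -> is_gmod Y ->
  forall (f : ghom X Y) (g : ghom X I), hom_mono f ->
  exists h : ghom Y I, forall i (x : Mc X i), hfun h i (hfun f i x) = hfun g i x.

Definition inj_resolution (k : fieldType) (A : zalg k) (T : gmodD A)
  (I : nat -> gmodD A) (d : forall p, ghom (I p) (I p.+1)) (eps : ghom T (I 0%N))
  : Prop :=
  (forall p, is_gmod (I p)) /\ (forall p, injective_gmod (I p)) /\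
  hom_mono eps /\ exact_at eps (d 0%N) /\
  (forall p, exact_at (d p) (d p.+1)).

(* x in M_i generates the submodule N with N_n = x A_{in}; N_n = 0 for n >> 0. *)
Definition torsion_elt (k : fieldType) (A : zalg k) (M : gmodD A) (i : int)
  (x : Mc M i) : Prop :=
  exists n0 : int, forall (n : int) (a : Ahom A i n), n0 <= n -> Mact M x a = 0.

Definition is_torsion (k : fieldType) (A : zalg k) (M : gmodD A) : Prop :=
  forall i (x : Mc M i), torsion_elt x.

(* R^p tau (T) = H^p (tau I^.) for an injective resolution I^. of T, where
   tau I^p is the submodule of torsion elements of I^p.  Vanishing for p>0: *)
Definition Rtau_vanishes (k : fieldType) (A : zalg k)
  (I : nat -> gmodD A) (d : forall p, ghom (I p) (I p.+1)) (p : nat) : Prop :=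
  forall i (x : Mc (I p.+1) i), torsion_elt x -> hfun (d p.+1) i x = 0 ->
  exists y : Mc (I p) i, torsion_elt y /\ hfun (d p) i y = x.

(* (M A_{>=1})_n : finite sums of x a, x in M_m, a in A_{mn}, m < n. *)
Inductive in_MA1 (k : fieldType) (A : zalg k) (M : gmodD A) (n : int)
  : Mc M n -> Prop :=
| in_MA1_0 : in_MA1 0
| in_MA1_step : forall (x : Mc M n) (m : int) (y : Mc M m) (a : Ahom A m n),
    m < n -> in_MA1 x -> in_MA1 (x + Mact M y a).

(* F is (isomorphic to) a finite direct sum  e_{l_1}A + ... + e_{l_r}A :
   it has a finite homogeneous basis b_j in degrees l_j. *)
Definition finite_free (k : fieldType) (A : zalg k) (F : gmodD A) : Prop :=
  exists (r : nat) (l : 'I_r -> int) (b : forall j : 'I_r, Mc F (l j)),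
    (forall n (x : Mc F n), exists a : forall j : 'I_r, Ahom A (l j) n,
        x = \sum_(j < r) Mact F (b j) (a j)) /\
    (forall n (a : forall j : 'I_r, Ahom A (l j) n),
        \sum_(j < r) Mact F (b j) (a j) = 0 -> forall j, a j = 0).

(* The module S_i = e_iA / (e_iA)_{>= i+1}: in degree n it is A_{in} for
   n <= i and 0 for n > i (the quotient, written out degreewise). *)
Definition zero_zmod : zmodType := 'M[int]_(0, 0).

Definition Sc_b (k : fieldType) (A : zalg k) (i n : int) (b : bool) : zmodType :=
  if b then (Ahom A i n : zmodType) else zero_zmod.

Definition Sc (k : fieldType) (A : zalg k) (i n : int) : zmodType :=
  Sc_b A i n (n <= i).

Definition Sact (k : fieldType) (A : zalg k) (i n m : int) :
  Sc A i n -> Ahom A n m -> Sc A i m :=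
  match n <= i as b return Sc_b A i n b -> Ahom A n m -> Sc A i m with
  | true => fun x a =>
      match m <= i as c return Sc_b A i m c with
      | true => Amul A x a
      | false => 0
      end
  | false => fun _ _ => 0
  end.

Definition Smod (k : fieldType) (A : zalg k) (i : int) : gmodD A :=
  @GModD k A (Sc A i) (@Sact k A i).

(* A minimal free resolution of S by finite free modules:
   ... --psi 1--> F 1 --psi 0--> F 0 --eps--> S -> 0, with im psi p in
   (F p) A_{>=1}. *)
Definition fin_min_free_resolution (k : fieldType) (A : zalg k) (S : gmodD A)
  (F : nat -> gmodD A) (psi : forall p, ghom (F p.+1) (F p)) (eps : ghom (F 0%N) S)
  : Prop :=
  (forall p, is_gmod (F p)) /\ (forall p, finite_free (F p)) /\
  hom_epi eps /\ exact_at (psi 0%N) eps /\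
  (forall p, exact_at (psi p.+1) (psi p)) /\
  (forall p i (x : Mc (F p.+1) i), in_MA1 (hfun (psi p) i x)).

Definition right_Ext_finite (k : fieldType) (A : zalg k) : Prop :=
  connected_zalg A /\
  forall i : int, exists (F : nat -> gmodD A) (psi : forall p, ghom (F p.+1) (F p))
    (eps : ghom (F 0%N) (Smod A i)), fin_min_free_resolution psi eps.

(* Let x = d y be a torsion cycle of I^(p+1).  The maps a |-> y a form a
   p-cocycle of Hom((e_i A)_(>=n), I^.) for n large, and it suffices that such a
   cocycle becomes a coboundary on (e_i A)_(>=N) for some N >= n (for p = 0: that
   it vanishes there): extending the primitive to e_i A by injectivity of I^p then
   corrects y to a torsion preimage of x.

   This eventual exactness is proved by induction on the degree m, simultaneously
   for the modules e_mu A and for the truncated syzygies im psi_p of the finite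
   minimal free resolutions of the simple modules S_lam.  When n <= mu nothing is
   truncated and exactness of I^. applies (ker d_0 = T is torsion when m = 0).
   When mu < n, (e_mu A)_(>=n) maps into the first syzygy of S_mu through a lift
   b in F_0 of e_mu.  For a syzygy im psi_p, pull the cocycle back along the
   finitely many basis vectors of F_(p+1); by minimality their degrees exceed lam,
   so the statement for e_mu A with mu > lam applies (an induction bounded by
   n - mu).  For m > 0 the primitives add up to U on F_(p+1) whose restriction to
   im psi_(p+1) is an (m-1)-cocycle, hence eventually d V; subtracting d of an
   extension of V makes U vanish on ker psi_p, so that it factors through psi_p. *)

From HB Require Import structures.
From mathcomp Require Import all_boot all_order all_algebra zify boolp classical_sets.
Set Implicit Arguments. Unset Strict Implicit. Unset Printing Implicit Defensive.
Import Order.TTheory GRing.Theory Num.Theory.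
Local Open Scope ring_scope.

Section AdditiveMorph.
Variables (U V : zmodType) (f : U -> V).
Hypothesis fD : {morph f : x y / x + y}.

Lemma additive0 : f 0 = 0.
Proof. by apply/(addrI (f 0)); rewrite -fD !addr0. Qed.

Lemma additiveB : {morph f : x y / x - y}.
Proof.
have fN x : f (- x) = - f x by apply/(addrI (f x)); rewrite -fD !subrr additive0.
by move=> x y; rewrite fD fN.
Qed.

Lemma additive_sum I (r : seq I) (P : pred I) (F : I -> U) :
  f (\sum_(i <- r | P i) F i) = \sum_(i <- r | P i) f (F i).
Proof. exact: (big_morph f fD additive0). Qed.
End AdditiveMorph.

Section ZAlgebraModules.
Variables (k : fieldType) (A : zalg k).

Lemma Amul0l i j l (b : Ahom A j l) : Amul A (0 : Ahom A i j) b = 0.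
Proof. exact: additive0 (fun a a' => Amul_addl a a' b). Qed.

Lemma Amul_suml i j l r (a : 'I_r -> Ahom A i j) (b : Ahom A j l) :
  Amul A (\sum_(t < r) a t) b = \sum_(t < r) Amul A (a t) b.
Proof. exact: (additive_sum (f := Amul A ^~ b) (fun a a' => Amul_addl a a' b)). Qed.

Section Module.
Variables (M : gmodD A) (HM : is_gmod M).

Lemma MactDl (i j : int) (a : Ahom A i j) : {morph Mact M ^~ a : x y / x + y}.
Proof. by case: HM => + _ x y => ->. Qed.

Lemma MactDr (i j : int) (x : Mc M i) : {morph Mact M (j := j) x : a b / a + b}.
Proof. by case: HM => _ [+ _] a b => ->. Qed.

Lemma MactA i j l (x : Mc M i) (a : Ahom A i j) (b : Ahom A j l) :
  Mact M (Mact M x a) b = Mact M x (Amul A a b).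
Proof. by case: HM => _ [_ [-> _]]. Qed.

Lemma Mact1 i (x : Mc M i) : Mact M x (Aunit A i) = x.
Proof. by case: HM => _ [_ [_ ->]]. Qed.

Lemma Mact0l i j (a : Ahom A i j) : Mact M 0 a = 0.
Proof. exact: additive0 (MactDl a). Qed.

Lemma Mact0r i j (x : Mc M i) : Mact M x (0 : Ahom A i j) = 0.
Proof. exact: additive0 (MactDr (j := j) x). Qed.

Lemma MactBl (i j : int) (a : Ahom A i j) : {morph Mact M ^~ a : x y / x - y}.
Proof. exact: additiveB (MactDl a). Qed.

Lemma MactBr (i j : int) (x : Mc M i) : {morph Mact M (j := j) x : a b / a - b}.
Proof. exact: additiveB (MactDr x). Qed.

Lemma Mact_suml i j r (x : 'I_r -> Mc M i) (a : Ahom A i j) :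
  Mact M (\sum_(t < r) x t) a = \sum_(t < r) Mact M (x t) a.
Proof. exact: (additive_sum (MactDl a)). Qed.
End Module.

Section Morphism.
Variables (M N : gmodD A) (f : ghom M N).

Lemma hfun0 i : hfun f i 0 = 0.
Proof. exact: additive0 (@hfun_add _ _ _ _ f i). Qed.

Lemma hfunB i : {morph hfun f i : x y / x - y}.
Proof. exact: additiveB (@hfun_add _ _ _ _ f i). Qed.

Lemma hfun_sum i r (x : 'I_r -> Mc M i) :
  hfun f i (\sum_(t < r) x t) = \sum_(t < r) hfun f i (x t).
Proof. exact: (additive_sum (@hfun_add _ _ _ _ f i)). Qed.
End Morphism.
End ZAlgebraModules.

Record zmod_subpred (V : zmodType) := ZmodSubpred {
  zsp_mem : V -> Prop;
  zsp0 : zsp_mem 0;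
  zspB : forall x y, zsp_mem x -> zsp_mem y -> zsp_mem (x - y) }.

Section SubZmodule.
Variables (V : zmodType) (S : zmod_subpred V).

Definition zsp_pred : pred V := fun x => `[< zsp_mem S x >].

Lemma zsp_pred_closed : zmod_closed zsp_pred.
Proof.
split; first exact/asboolP/zsp0.
by move=> x y /asboolP Sx /asboolP Sy; apply/asboolP; exact: zspB.
Qed.

HB.instance Definition _ := GRing.isZmodClosed.Build V zsp_pred zsp_pred_closed.
Inductive subzmod : Type := SubZmod (x : V) of zsp_pred x.
Definition subzmod_val (s : subzmod) : V := let: SubZmod x _ := s in x.
HB.instance Definition _ := [isSub for subzmod_val].
HB.instance Definition _ := [Choice of subzmod by <:].
HB.instance Definition _ := [SubChoice_isSubZmodule of subzmod by <:].

Lemma subzmod_valP (s : subzmod) : zsp_mem S (val s).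
Proof. by case: s => x Sx; apply/asboolP. Qed.
End SubZmodule.

Section Submodules.
Variables (k : fieldType) (A : zalg k).
Implicit Types X Y : gmodD A.

Definition gpred X := forall j, Mc X j -> Prop.
Definition gfun X Y := forall j, Mc X j -> Mc Y j.

Record linear_on X Y (P : gpred X) (f : gfun X Y) : Prop := LinearOn {
  linear_onD : forall j x y, P j x -> P j y -> f j (x + y) = f j x + f j y;
  linear_on_act : forall j j' x (a : Ahom A j j'),
    P j x -> f j' (Mact X x a) = Mact Y (f j x) a }.

Record submod_pred X (P : gpred X) : Prop := SubmodPred {
  submod0 : forall j, P j 0;
  submodB : forall j x y, P j x -> P j y -> P j (x - y);
  submod_act : forall j j' x (a : Ahom A j j'), P j x -> P j' (Mact X x a) }.

Lemma submodD X (P : gpred X) j x y : submod_pred P -> P j x -> P j y -> P j (x + y).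
Proof.
move=> HP Px Py; have -> : x + y = x - (0 - y) by rewrite sub0r opprK.
by apply: submodB => //; apply: submodB => //; exact: submod0.
Qed.

Lemma linear_on0 X Y (P : gpred X) (f : gfun X Y) j : P j 0 -> linear_on P f -> f j 0 = 0.
Proof. by move=> P0 Hf; apply/(addrI (f j 0)); rewrite -(linear_onD Hf) ?addr0. Qed.

Lemma linear_onB X Y (P : gpred X) (f : gfun X Y) j x y :
  submod_pred P -> linear_on P f -> P j x -> P j y -> f j (x - y) = f j x - f j y.
Proof.
move=> HP Hf Px Py; apply/(addIr (f j y)).
by rewrite subrK -(linear_onD Hf) ?subrK //; exact: submodB.
Qed.

Lemma linear_on_sum X Y (P : gpred X) (f : gfun X Y) j r (x : 'I_r -> Mc X j) :
  submod_pred P -> linear_on P f -> (forall t, P j (x t)) ->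
  f j (\sum_(t < r) x t) = \sum_(t < r) f j (x t).
Proof.
move=> HP Hf Px.
suff [] : P j (\sum_(t < r) x t) /\ f j (\sum_(t < r) x t) = \sum_(t < r) f j (x t) by [].
elim/big_rec2: _ => [|t y z _ [Py <-]].
  by split; [exact: submod0 | exact: linear_on0 (submod0 HP j) Hf].
by split; [exact: submodD | rewrite (linear_onD Hf)].
Qed.

Lemma ghom_linear_on X Y (f : ghom X Y) (P : gpred X) : linear_on P (hfun f).
Proof. by split=> *; rewrite ?hfun_add ?hfun_act. Qed.

Lemma linear_onW X Y (P Q : gpred X) (f : gfun X Y) :
  (forall j x, Q j x -> P j x) -> linear_on P f -> linear_on Q f.
Proof. by move=> QP [fD fA]; split=> *; [apply: fD | apply: fA]; apply: QP. Qed.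

Lemma linear_on_comp X Y Z (P : gpred X) (Q : gpred Y) (g : gfun X Y) (f : gfun Y Z) :
  (forall j x, P j x -> Q j (g j x)) -> linear_on P g -> linear_on Q f ->
  linear_on P (fun j x => f j (g j x)).
Proof.
move=> PQ [gD gA] [fD fA]; split=> *; first by rewrite gD ?fD //; exact: PQ.
by rewrite gA ?fA //; exact: PQ.
Qed.

Section SubGmod.
Unset Implicit Arguments.
Variables (Y : gmodD A) (P : gpred Y).
Set Implicit Arguments.
Hypothesis HP : submod_pred P.

Definition submod_zpred j : zmod_subpred (Mc Y j) :=
  ZmodSubpred (submod0 HP j) (@submodB _ _ HP j).

Lemma sub_gmod_valP j (s : subzmod (submod_zpred j)) : P j (val s).
Proof. exact: (subzmod_valP s). Qed.

Definition sub_gmod_act j j' (s : subzmod (submod_zpred j)) (a : Ahom A j j') :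
    subzmod (submod_zpred j') :=
  @SubZmod _ (submod_zpred j') (Mact Y (val s) a)
    (introT (asboolP _) (submod_act HP a (sub_gmod_valP s))).

Definition sub_gmod : gmodD A := @GModD k A (fun j => subzmod (submod_zpred j)) sub_gmod_act.

Lemma sub_gmodP : is_gmod Y -> is_gmod sub_gmod.
Proof.
move=> HY; split; [|split; [|split]] => *; apply: val_inj => /=.
- exact: MactDl.
- exact: MactDr.
- exact: MactA.
- exact: Mact1.
Qed.

Definition sub_incl : ghom sub_gmod Y :=
  @GHom k A sub_gmod Y (fun j s => val (s : subzmod (submod_zpred j)))
    (fun _ _ _ => erefl) (fun _ _ _ _ => erefl).

Section Restriction.
Unset Implicit Arguments.
Variables (J : gmodD A) (v : gfun Y J).
Set Implicit Arguments.
Hypothesis Hv : linear_on P v.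

Lemma sub_restrD j (s t : subzmod (submod_zpred j)) :
  v j (val (s + t)) = v j (val s) + v j (val t).
Proof. by rewrite /= (linear_onD Hv) //; exact: sub_gmod_valP. Qed.

Lemma sub_restr_act j j' (s : subzmod (submod_zpred j)) (a : Ahom A j j') :
  v j' (val (sub_gmod_act s a)) = Mact J (v j (val s)) a.
Proof. by rewrite /= (linear_on_act Hv) //; exact: sub_gmod_valP. Qed.

Definition sub_restr : ghom sub_gmod J :=
  @GHom k A sub_gmod J (fun j s => v j (val (s : subzmod (submod_zpred j)))) sub_restrD
    sub_restr_act.
End Restriction.
End SubGmod.

Lemma injective_extend Y J (P : gpred Y) (v : gfun Y J) :
  is_gmod Y -> submod_pred P -> linear_on P v -> injective_gmod J ->
  exists h : ghom Y J, forall j x, P j x -> hfun h j x = v j x.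
Proof.
move=> HY HP Hv HJ.
have [|h Hh] := HJ _ Y (sub_gmodP HP HY) HY (sub_incl HP) (sub_restr HP Hv).
  by move=> j s t /= /val_inj.
exists h => j x Px.
exact: Hh j (@SubZmod _ (submod_zpred HP j) x (introT (asboolP _) Px)).
Qed.
End Submodules.

Record homog_basis (k : fieldType) (A : zalg k) (F : gmodD A) := HomogBasis {
  bsize : nat;
  bdeg : 'I_bsize -> int;
  bvec : forall t, Mc F (bdeg t);
  bspan : forall n (x : Mc F n), exists a : forall t, Ahom A (bdeg t) n,
    x = \sum_(t < bsize) Mact F (bvec t) (a t);
  bfree : forall n (a : forall t, Ahom A (bdeg t) n),
    \sum_(t < bsize) Mact F (bvec t) (a t) = 0 -> forall t, a t = 0 }.
Arguments bdeg {k A F} B t : rename.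
Arguments bvec {k A F} B t : rename.
Arguments bspan {k A F} B [n] x : rename.
Arguments bfree {k A F} B [n] a _ t : rename.

Section FreeModules.
Variables (k : fieldType) (A : zalg k).
Implicit Types F : gmodD A.

Lemma finite_free_basis F : finite_free F -> inhabited (homog_basis F).
Proof. by case=> r [l [b [span free]]]; exists; exact: HomogBasis span free. Qed.

Section Coordinates.
Variables (F : gmodD A) (HF : is_gmod F) (B : homog_basis F).

Definition coord n (x : Mc F n) : forall t, Ahom A (bdeg B t) n := sval (cid (bspan B x)).

Lemma coordE n (x : Mc F n) : x = \sum_(t < bsize B) Mact F (bvec B t) (coord x t).
Proof. exact: svalP (cid (bspan B x)). Qed.

Lemma coord_uniq n (x : Mc F n) (a : forall t, Ahom A (bdeg B t) n) :
  x = \sum_(t < bsize B) Mact F (bvec B t) (a t) -> forall t, coord x t = a t.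
Proof.
move=> xE t; apply/eqP; rewrite -subr_eq0; apply/eqP; move: t; apply: bfree.
by under eq_bigr do rewrite (MactBr HF); rewrite sumrB -coordE -xE subrr.
Qed.

Lemma coordD n (x y : Mc F n) t : coord (x + y) t = coord x t + coord y t.
Proof.
move: t; apply: coord_uniq.
by under eq_bigr do rewrite (MactDr HF); rewrite big_split -!coordE.
Qed.

Lemma coord0 n t : coord (0 : Mc F n) t = 0.
Proof. by apply/(addrI (coord (0 : Mc F n) t)); rewrite -coordD !addr0. Qed.

Lemma coord_act n n' (x : Mc F n) (a : Ahom A n n') t :
  coord (Mact F x a) t = Amul A (coord x t) a.
Proof.
move: t; apply: coord_uniq.
by under eq_bigr do rewrite -(MactA HF); rewrite -(Mact_suml HF) -coordE.
Qed.

Hypothesis conn : forall i j (a : Ahom A i j), j < i -> a = 0.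

Lemma coord_MA1 n (x : Mc F n) t : in_MA1 x -> bdeg B t = n -> coord x t = 0.
Proof.
move=> + degt; elim=> [|y m z a mn _ IH]; first exact: coord0.
by rewrite coordD IH coord_act add0r (conn (coord z t)) ?Amul0l // degt.
Qed.

Definition basis_delta t0 t : Ahom A (bdeg B t) (bdeg B t0) :=
  if t0 =P t is ReflectT e then
    eq_rect t0 (fun t => Ahom A (bdeg B t) (bdeg B t0)) (Aunit A (bdeg B t0)) t e
  else 0.

Lemma basis_deltaE t0 : \sum_(t < bsize B) Mact F (bvec B t) (basis_delta t0 t) = bvec B t0.
Proof.
rewrite (bigD1 t0) //= big1 => [|t t_neq].
  by rewrite /basis_delta; case: eqP => // e; rewrite eq_axiomK (Mact1 HF) addr0.
by rewrite /basis_delta; case: eqP => [e|_]; [rewrite e eqxx in t_neq | exact: Mact0r].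
Qed.

Lemma bvec_MA1 t : in_MA1 (bvec B t) -> Aunit A (bdeg B t) = 0.
Proof.
move=> MA1t; have := coord_uniq (esym (basis_deltaE t)) t.
by rewrite /basis_delta; case: eqP => // e; rewrite eq_axiomK /= => <-; exact: coord_MA1.
Qed.

Lemma free_eq0 m (x : Mc F m) :
  (forall t, bdeg B t <= m -> in_MA1 (bvec B t)) -> x = 0.
Proof.
move=> MA1B; rewrite (coordE x) big1 // => t _.
have [tm | mt] := leP (bdeg B t) m.
  have e_eq0 : Aunit A (bdeg B t) = 0 := bvec_MA1 (MA1B t tm).
  by rewrite -(Amul1l (coord x t)) e_eq0 (Amul0l (bdeg B t)) (Mact0r HF).
by rewrite (conn (coord x t)) // (Mact0r HF).
Qed.
End Coordinates.
End FreeModules.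
Arguments coord {k A F} B [n] x t.

Section SimpleModule.
Variables (k : fieldType) (A : zalg k).

Definition S_to_A i n : Sc A i n -> Ahom A i n :=
  match n <= i as b return Sc_b A i n b -> Ahom A i n with
  | true => id
  | false => fun _ => 0
  end.

Definition A_to_S i n (a : Ahom A i n) : Sc A i n :=
  match n <= i as b return Sc_b A i n b with
  | true => a
  | false => 0
  end.

Lemma A_to_SK i n (a : Ahom A i n) : n <= i -> S_to_A (A_to_S a) = a.
Proof. by rewrite /S_to_A /A_to_S /Sc; case: (n <= i). Qed.

Lemma S_to_AD i n : {morph @S_to_A i n : x y / x + y}.
Proof. by rewrite /S_to_A /Sc; case: (n <= i) => x y //=; rewrite addr0. Qed.

Lemma S_to_A_sum i n r (x : 'I_r -> Sc A i n) :
  S_to_A (\sum_(t < r) x t) = \sum_(t < r) S_to_A (x t).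
Proof. exact: (additive_sum (@S_to_AD i n)). Qed.

Lemma S_to_A_act i n m (x : Sc A i n) (a : Ahom A n m) :
  m <= i -> S_to_A (Sact x a) = Amul A (S_to_A x) a.
Proof.
rewrite /Sact /S_to_A; move: x; rewrite /Sc.
by case: (n <= i) => x; case: (m <= i) => //= _; rewrite Amul0l.
Qed.

Lemma Sc_eq0_above i n (x : Sc A i n) : i < n -> x = 0.
Proof. by rewrite ltNge => /negbTE ni; move: x; rewrite /Sc ni => x; exact: flatmx0. Qed.

Lemma Sc_eq0_below (conn : forall i j (a : Ahom A i j), j < i -> a = 0) i n (x : Sc A i n) :
  n < i -> x = 0.
Proof. by move=> ni; move: x; rewrite /Sc (ltW ni) => x; exact: conn. Qed.
End SimpleModule.

Lemma MA1_eq0 (k : fieldType) (A : zalg k) (M : gmodD A) n (x : Mc M n) :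
  is_gmod M -> (forall m (y : Mc M m), m < n -> y = 0) -> in_MA1 x -> x = 0.
Proof. by move=> HM Mlow; elim=> [|y m z a mn _ ->] //; rewrite (Mlow m z mn) Mact0l ?addr0. Qed.

Section MinimalResolution.
Variables (k : fieldType) (A : zalg k) (lam : int).
Hypothesis conn : forall i j (a : Ahom A i j), j < i -> a = 0.
Variables (F : nat -> gmodD A) (psi : forall p, ghom (F p.+1) (F p)).
Variable (eps : ghom (F 0%N) (Smod A lam)).
Hypothesis HR : fin_min_free_resolution psi eps.

Lemma res_gmod p : is_gmod (F p). Proof. by case: HR. Qed.
Lemma res_free p : finite_free (F p). Proof. by case: HR => _ []. Qed.
Lemma res_epi : hom_epi eps. Proof. by case: HR => _ [_ []]. Qed.
Lemma res_exact0 : exact_at (psi 0%N) eps. Proof. by case: HR => _ [_ [_ []]]. Qed.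
Lemma res_exact p : exact_at (psi p.+1) (psi p). Proof. by case: HR => _ [_ [_ [_ []]]]. Qed.
Lemma res_minimal p i (x : Mc (F p.+1) i) : in_MA1 (hfun (psi p) i x).
Proof. by case: HR => _ [_ [_ [_ [_ ]]]]. Qed.

Lemma res_comp0 p j (z : Mc (F p.+2) j) : hfun (psi p) j (hfun (psi p.+1) j z) = 0.
Proof. by apply/res_exact; exists z. Qed.

Lemma res0_eq0_below m (x : Mc (F 0%N) m) : m < lam -> x = 0.
Proof.
move=> m_lt; have [B] := finite_free_basis (res_free 0%N).
apply: (free_eq0 (B := B) (res_gmod 0%N) conn) => t tm.
have : hfun eps _ (bvec B t) = 0 by apply: Sc_eq0_below conn _ _ _ (le_lt_trans tm m_lt).
by case/res_exact0 => z <-; exact: res_minimal.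
Qed.

Lemma res_eq0_succ p m (x : Mc (F p.+1) m) :
  (forall m' (y : Mc (F p) m'), m' < m -> y = 0) -> x = 0.
Proof.
move=> Fp_low; have [B] := finite_free_basis (res_free p.+1).
apply: (free_eq0 (B := B) (res_gmod _) conn) => t tm.
have : hfun (psi p) _ (bvec B t) = 0.
  apply: (MA1_eq0 (res_gmod p)); last exact: res_minimal.
  by move=> m' y m't; exact: Fp_low (lt_le_trans m't tm).
by case/res_exact => z <-; exact: res_minimal.
Qed.

Lemma resS_eq0_le p m (x : Mc (F p.+1) m) : m <= lam -> x = 0.
Proof.
elim: p m x => [|p IH] m x m_le; apply: res_eq0_succ => m' y m'm.
  exact: res0_eq0_below (lt_le_trans m'm m_le).
exact: IH (ltW (lt_le_trans m'm m_le)).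
Qed.
End MinimalResolution.

Lemma ubound_finite r (f : 'I_r -> int) (n : int) : exists2 N, n <= N & forall t, f t <= N.
Proof.
exists (`|n|%:Z + \sum_(t < r) `|f t|%:Z); first by rewrite ler_wpDr ?sumr_ge0 ?ler_norm.
move=> t; rewrite addrC ler_wpDr // (bigD1 t) //=.
by rewrite ler_wpDr ?sumr_ge0 ?ler_norm.
Qed.

Section Truncation.
Variables (k : fieldType) (A : zalg k).
Hypothesis conn : forall i j (a : Ahom A i j), j < i -> a = 0.
Implicit Types X Y : gmodD A.

Definition eA (mu : int) : gmodD A :=
  @GModD k A (fun j => Ahom A mu j : zmodType) (fun j j' x a => Amul A x a).

Lemma eA_gmod mu : is_gmod (eA mu).
Proof.
split; [|split; [|split]] => /= *; [exact: Amul_addl | exact: Amul_addr | | exact: Amul1r].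
exact: AmulA.
Qed.

Definition eA_map X (HX : is_gmod X) mu (x : Mc X mu) : ghom (eA mu) X :=
  @GHom k A (eA mu) X (fun j a => Mact X x a) (fun j => MactDr HX (j := j) x)
    (fun j j' a b => esym (MactA HX x a b)).

Definition trunc X (N : int) : gpred X := fun j x => N <= j \/ x = 0.

Definition im_trunc X Y (f : ghom X Y) (N : int) : gpred Y :=
  fun j y => (exists x, hfun f j x = y) /\ trunc N y.

Lemma trunc0 X N j : trunc N (0 : Mc X j).
Proof. by right. Qed.

Lemma truncW X N N' j (x : Mc X j) : N <= N' -> trunc N' x -> trunc N x.
Proof. by move=> NN' [N'j | ->]; [left; exact: le_trans NN' N'j | right]. Qed.

Lemma im_trunc0 X Y (f : ghom X Y) N j : im_trunc f N (0 : Mc Y j).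
Proof. by split; [exists 0; rewrite hfun0 | right]. Qed.

Lemma im_trunc_sub X Y (f : ghom X Y) N j (y : Mc Y j) : im_trunc f N y -> trunc N y.
Proof. by case. Qed.

Lemma trunc_submod X N : is_gmod X -> submod_pred (@trunc X N).
Proof.
move=> HX; split=> [j | j x y [Nj | ->] [Nj' | ->] | j j' x a [Nj | ->]];
  rewrite ?subrr ?subr0 ?(Mact0l HX); try by [left | right].
have [Nj' | j'N] := leP N j'; first by left.
by right; rewrite (conn a) ?(Mact0r HX) // (lt_le_trans j'N Nj).
Qed.

Lemma im_trunc_submod X Y (f : ghom X Y) N : is_gmod Y -> submod_pred (im_trunc f N).
Proof.
move=> HY; have [T0 TB TA] := trunc_submod N HY.
split=> [j | j _ _ [[x <-] Tx] [[y <-] Ty] | j j' _ a [[x <-] Tx]]; split=> //.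
- by exists 0; rewrite hfun0.
- by exists (x - y); rewrite hfunB.
- exact: TB.
- by exists (Mact X x a); rewrite hfun_act.
- exact: TA.
Qed.

Lemma linear_factor X Y J (f : ghom X Y) (N : int) (W : gfun X J) :
  is_gmod X -> is_gmod Y -> is_gmod J -> linear_on (trunc N) W ->
  (forall j x, N <= j -> hfun f j x = 0 -> W j x = 0) ->
  exists2 u : gfun Y J, linear_on (im_trunc f N) u &
    forall j x, N <= j -> u j (hfun f j x) = W j x.
Proof.
move=> HX HY HJ HW Wker.
pose u j y := if N <= j then W j (xget 0 (fun x => hfun f j x = y)) else 0.
have uf j x : N <= j -> u j (hfun f j x) = W j x.
  move=> Nj; rewrite /u Nj; set x' := xget _ _.
  have fx' : hfun f j x' = hfun f j x.
    by apply: (@xgetPex _ 0 (fun z => hfun f j z = hfun f j x)); exists x.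
  apply/eqP; rewrite -subr_eq0 -(linear_onB (trunc_submod N HX) HW); try by left.
  by rewrite Wker // hfunB fx' subrr.
have u0 j : u j 0 = 0.
  have [Nj | jN] := leP N j; last by rewrite /u leNgt jN.
  by rewrite -(hfun0 f) uf // (linear_on0 (trunc0 _ N j) HW).
exists u => //; split=> [j _ _ [[x <-] _] [[y <-] _] | j j' _ a [[x <-] [Nj | ->]]].
- have [Nj | jN] := leP N j; last by rewrite /u leNgt jN addr0.
  by rewrite -hfun_add !uf // (linear_onD HW) //; left.
- have [Nj' | j'N] := leP N j'.
    by rewrite -hfun_act !uf // (linear_on_act HW) //; left.
  by rewrite (conn a) ?(Mact0r HY) ?(Mact0r HJ) ?u0 // (lt_le_trans j'N Nj).
- by rewrite (Mact0l HY) !u0 (Mact0l HJ).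
Qed.
End Truncation.

Section LiftToFree.
Variables (k : fieldType) (A : zalg k) (F : gmodD A) (HF : is_gmod F) (B : homog_basis F).
Variables (mu : int) (phi : ghom F (Smod A mu)).

Definition S_lift_fun j (x : Mc F j) : Ahom A mu j :=
  \sum_(t < bsize B) Amul A (S_to_A (hfun phi _ (bvec B t))) (coord B x t).

Lemma S_lift_add j (x y : Mc F j) : S_lift_fun (x + y) = S_lift_fun x + S_lift_fun y.
Proof.
by rewrite -big_split; apply: eq_bigr => t _; rewrite (coordD HF) Amul_addr.
Qed.

Lemma S_lift_act j j' (x : Mc F j) (a : Ahom A j j') :
  S_lift_fun (Mact F x a) = Amul A (S_lift_fun x) a.
Proof. by rewrite Amul_suml; apply: eq_bigr => t _; rewrite (coord_act HF) AmulA. Qed.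

Definition S_lift : ghom F (eA A mu) := @GHom k A F (eA A mu) S_lift_fun S_lift_add S_lift_act.

Lemma S_liftE j (x : Mc F j) : j <= mu -> hfun S_lift j x = S_to_A (hfun phi j x).
Proof.
move=> jmu; rewrite [in RHS](coordE B x) hfun_sum S_to_A_sum; apply: eq_bigr => t _.
by rewrite hfun_act -[Mact _ _ _]/(Sact _ _) S_to_A_act.
Qed.
End LiftToFree.

Section InjectiveResolution.
Variables (k : fieldType) (A : zalg k).
Hypothesis conn : forall i j (a : Ahom A i j), j < i -> a = 0.
Unset Implicit Arguments.
Hypothesis res_exists : forall lam : int, exists F (psi : forall p, ghom (F p.+1) (F p))
  (eps : ghom (F 0%N) (Smod A lam)), fin_min_free_resolution psi eps.
Variables (I : nat -> gmodD A) (d : forall p, ghom (I p) (I p.+1)).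
Hypotheses (HI : forall p, is_gmod (I p)) (I_inj : forall p, injective_gmod (I p)).
Hypothesis d_exact : forall p, exact_at (d p) (d p.+1).
Hypothesis ker_d0_tors : forall j (x : Mc (I 0%N) j), hfun (d 0%N) j x = 0 -> torsion_elt x.
Set Implicit Arguments.
Implicit Types X Y : gmodD A.

Lemma d_comp0 p j (x : Mc (I p) j) : hfun (d p.+1) j (hfun (d p) j x) = 0.
Proof. by apply/(d_exact p j); exists x. Qed.

Definition cocycle_on m X (P : gpred X) (c : gfun X (I m)) : Prop :=
  forall j x, P j x -> hfun (d m) j (c j x) = 0.

Definition coboundary_on m X (P : gpred X) : gfun X (I m) -> Prop :=
  match m return gfun X (I m) -> Prop with
  | 0 => fun c => forall j x, P j x -> c j x = 0
  | m'.+1 => fun c => exists2 u : gfun X (I m'), linear_on P u &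
      forall j x, P j x -> hfun (d m') j (u j x) = c j x
  end.

(* As Hom(-, I^.) computes Ext(-, T): the class of c in Ext^m(X_(>=n), T) dies
   in colim_N Ext^m(X_(>=N), T). *)
Definition eventually_coboundary m X (P : int -> gpred X) (n : int) : Prop :=
  forall c : gfun X (I m), linear_on (P n) c -> cocycle_on (P n) c ->
  exists2 N, n <= N & coboundary_on (P N) c.

Definition eA_eventually_coboundary m mu n : Prop :=
  eventually_coboundary m (@trunc _ _ (eA A mu)) n.

Definition syzygies_eventually_coboundary m : Prop :=
  forall lam F (psi : forall p, ghom (F p.+1) (F p)) (eps : ghom (F 0%N) (Smod A lam)),
  fin_min_free_resolution psi eps ->
  forall p n, eventually_coboundary m (im_trunc (psi p)) n.

Lemma coboundary_on_eq0 m X (P : gpred X) (c : gfun X (I m)) :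
  (forall j x, P j x -> c j x = 0) -> coboundary_on P c.
Proof.
case: m c => [|m] c c0 //=; exists (fun _ _ => 0) => [|j x Px]; last by rewrite hfun0 c0.
by split=> *; rewrite ?addr0 ?(Mact0l (HI m)).
Qed.

Lemma coboundary_onW m X (P Q : gpred X) (c : gfun X (I m)) :
  (forall j x, Q j x -> P j x) -> coboundary_on P c -> coboundary_on Q c.
Proof.
case: m c => [|m] c QP /=; first by move=> c0 j x /QP; exact: c0.
by case=> u Hu du; exists u => [|j x /QP]; [exact: linear_onW Hu | exact: du].
Qed.

Lemma coboundary_on_comp m X Y (P : gpred X) (Q : gpred Y) (g : gfun X Y)
    (c : gfun X (I m)) (c' : gfun Y (I m)) :
  (forall j x, P j x -> Q j (g j x)) -> linear_on P g ->
  (forall j x, P j x -> c j x = c' j (g j x)) ->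
  coboundary_on Q c' -> coboundary_on P c.
Proof.
case: m c c' => [|m] c c' PQ Hg cc' /=.
  by move=> c'0 j x Px; rewrite cc' // c'0 //; exact: PQ.
case=> u Hu du; exists (fun j x => u j (g j x)); first exact: linear_on_comp Hg Hu.
by move=> j x Px; rewrite du ?cc' //; exact: PQ.
Qed.

Lemma eA_trunc_le mu n j (a : Mc (eA A mu) j) : n <= mu -> trunc n a.
Proof.
move=> nmu; have [muj | jmu] := leP mu j; first by left; exact: le_trans nmu muj.
by right; exact: conn.
Qed.

Lemma eA_eventually_coboundary_le m mu n : n <= mu -> eA_eventually_coboundary m mu n.
Proof.
move=> nmu c Hc c_cocycle; set w := c mu (Aunit A mu).
have cE j (a : Mc (eA A mu) j) : c j a = Mact (I m) w a.
  rewrite -(linear_on_act Hc) /=; first by rewrite (Amul1l (i := mu)).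
  exact: eA_trunc_le.
have dw : hfun (d m) mu w = 0 by apply: c_cocycle; exact: eA_trunc_le.
case: m c w {Hc c_cocycle} cE dw => [|m] c w cE dw.
  have [n0 wn0] := ker_d0_tors _ _ dw.
  exists (Num.max n n0); first by rewrite le_max lexx.
  by move=> j a [|->]; rewrite ?cE ?(Mact0r (HI _)) // ge_max => /andP[_]; exact: wn0.
have [w' dw'] := (d_exact m mu w).1 dw.
exists n => //; exists (hfun (eA_map (HI m) w')) => [|j a _]; first exact: ghom_linear_on.
by rewrite /= hfun_act dw' cE.
Qed.

Section SyzygyStep.
Unset Implicit Arguments.
Variables (lam : int) (F : nat -> gmodD A) (psi : forall p, ghom (F p.+1) (F p)).
Variables (eps : ghom (F 0%N) (Smod A lam)) (p : nat).
Set Implicit Arguments.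
Hypothesis HR : fin_min_free_resolution psi eps.

Lemma im_trunc_psi_submod q N : submod_pred (im_trunc (psi q) N).
Proof. exact: (im_trunc_submod conn (psi q) N (res_gmod HR q)). Qed.

Section Basis.
Variable B : homog_basis (F p.+1).

Unset Implicit Arguments.
Definition basis_image t : gfun (eA A (bdeg B t)) (F p) :=
  fun j a => hfun (psi p) j (Mact (F p.+1) (bvec B t) a).

Definition coord_sum {Y} (u : forall t, gfun (eA A (bdeg B t)) Y) : gfun (F p.+1) Y :=
  fun j z => \sum_(t < bsize B) u t j (coord B z t).
Set Implicit Arguments.

Lemma basis_image_linear t N : linear_on (trunc N) (basis_image t).
Proof.
split=> *; rewrite /basis_image /=; first by rewrite (MactDr (res_gmod HR _)) hfun_add.
by rewrite -(MactA (res_gmod HR _)) hfun_act.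
Qed.

Lemma basis_image_trunc t N j (a : Mc (eA A (bdeg B t)) j) :
  trunc N a -> im_trunc (psi p) N (basis_image t j a).
Proof.
case=> [Nj | ->]; first by split; [eexists | left].
by rewrite /basis_image (Mact0r (res_gmod HR _)) hfun0; exact: im_trunc0.
Qed.

Lemma coord_trunc N j (z : Mc (F p.+1) j) t :
  trunc N z -> trunc (X := eA A (bdeg B t)) N (coord B z t).
Proof. by case=> [Nj | ->]; [left | right; exact: (coord0 (res_gmod HR _) j t)]. Qed.

Lemma coord_sum_linear Y N (u : forall t, gfun (eA A (bdeg B t)) Y) :
  is_gmod Y -> (forall t, linear_on (trunc N) (u t)) -> linear_on (trunc N) (coord_sum u).
Proof.
move=> HY Hu; split=> [j z z' Tz Tz' | j j' z a Tz]; rewrite /coord_sum.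
  rewrite -big_split; apply: eq_bigr => t _.
  by rewrite (coordD (res_gmod HR _)) (linear_onD (Hu t)) //; exact: coord_trunc.
rewrite (Mact_suml HY); apply: eq_bigr => t _.
by rewrite (coord_act (res_gmod HR _)) (linear_on_act (Hu t) _ (coord_trunc _ Tz)).
Qed.

Lemma cocycle_decomp m n (c : gfun (F p) (I m)) j (z : Mc (F p.+1) j) :
  linear_on (im_trunc (psi p) n) c -> n <= j ->
  c j (hfun (psi p) j z) = coord_sum (fun t j a => c j (basis_image t j a)) j z.
Proof.
move=> Hc nj; rewrite {1}(coordE B z) hfun_sum.
rewrite (linear_on_sum (im_trunc_psi_submod p n) Hc) // => t.
by apply: basis_image_trunc; left.
Qed.

Lemma pullbacks_eventually_coboundary m n (c : gfun (F p) (I m)) :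
  (forall mu, lam < mu -> eA_eventually_coboundary m mu n) ->
  linear_on (im_trunc (psi p) n) c -> cocycle_on (im_trunc (psi p) n) c ->
  exists2 N, n <= N &
    forall t, coboundary_on (trunc N) (fun j a => c j (basis_image t j a)).
Proof.
move=> free_ev Hc c_cocycle.
have cob t : exists2 N, n <= N & coboundary_on (trunc N) (fun j a => c j (basis_image t j a)).
  have [lam_lt | le_lam] := ltP lam (bdeg B t).
    apply: free_ev lam_lt _ _ _.
      exact: linear_on_comp (@basis_image_trunc t n) (basis_image_linear t n) Hc.
    by move=> j a Ta; apply: c_cocycle; exact: basis_image_trunc.
  exists n => //; apply: coboundary_on_eq0 => j a _.
  rewrite /basis_image (resS_eq0_le conn HR (bvec B t) le_lam) (Mact0l (res_gmod HR _)).
  by rewrite hfun0 (linear_on0 (im_trunc0 _ _ _) Hc).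
have [N nN NfN] := ubound_finite (fun t => s2val (cid2 (cob t))) n.
exists N => // t; apply: coboundary_onW (s2valP' (cid2 (cob t))) => j a.
exact: truncW.
Qed.

Lemma syzygy_step0 n (c : gfun (F p) (I 0%N)) :
  (forall mu, lam < mu -> eA_eventually_coboundary 0 mu n) ->
  linear_on (im_trunc (psi p) n) c -> cocycle_on (im_trunc (psi p) n) c ->
  exists2 N, n <= N & coboundary_on (im_trunc (psi p) N) c.
Proof.
move=> free_ev Hc c_cocycle.
have [N nN c_cob] := pullbacks_eventually_coboundary free_ev Hc c_cocycle.
exists N => // j _ [[z <-] [Nj | ->]]; last exact: linear_on0 (im_trunc0 _ _ _) Hc.
rewrite (cocycle_decomp z Hc (le_trans nN Nj)) /coord_sum big1 // => t _.
by apply: c_cob; left.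
Qed.

Lemma kernel_correction m N1 N2 (U : gfun (F p.+1) (I m)) :
  linear_on (trunc N1) U -> coboundary_on (im_trunc (psi p.+1) N2) U ->
  exists2 W : gfun (F p.+1) (I m), linear_on (trunc N1) W &
    (forall j z, N2 <= j -> hfun (psi p) j z = 0 -> W j z = 0) /\
    (forall j z, hfun (d m) j (W j z) = hfun (d m) j (U j z)).
Proof.
move=> HU; have ker_im j z : N2 <= j -> hfun (psi p) j z = 0 -> im_trunc (psi p.+1) N2 z.
  by move=> N2j /(res_exact HR) ?; split=> //; left.
case: m U HU => [|m] U HU /=.
  by move=> U0; exists U => //; split=> // j z N2j /(ker_im _ _ N2j); exact: U0.
case=> V HV dV.
have [h hV] := injective_extend (res_gmod HR p.+1) (im_trunc_psi_submod p.+1 N2) HV (I_inj m).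
exists (fun j z => U j z - hfun (d m) j (hfun h j z)).
  split=> [j z z' Tz Tz' | j j' z a Tz].
    by rewrite (linear_onD HU) // !hfun_add addrACA opprD.
  by rewrite (linear_on_act HU) // !hfun_act (MactBl (HI _)).
split=> [j z N2j /(ker_im _ _ N2j) Iz | j z]; first by rewrite hV // dV // subrr.
by rewrite hfunB d_comp0 subr0.
Qed.

Lemma syzygy_stepS m n (c : gfun (F p) (I m.+1)) :
  syzygies_eventually_coboundary m ->
  (forall mu, lam < mu -> eA_eventually_coboundary m.+1 mu n) ->
  linear_on (im_trunc (psi p) n) c -> cocycle_on (im_trunc (psi p) n) c ->
  exists2 N, n <= N & coboundary_on (im_trunc (psi p) N) c.
Proof.
move=> syz_ev free_ev Hc c_cocycle.
have [N1 nN1 c_cob] := pullbacks_eventually_coboundary free_ev Hc c_cocycle.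
pose u t := s2val (cid2 (c_cob t)).
have Hu t : linear_on (trunc N1) (u t) := s2valP (cid2 (c_cob t)).
have du t j (a : Mc (eA A (bdeg B t)) j) :
    trunc N1 a -> hfun (d m) j (u t j a) = c j (basis_image t j a).
  exact: (s2valP' (cid2 (c_cob t)) j a).
have HU : linear_on (trunc N1) (coord_sum u) := coord_sum_linear (HI m) Hu.
have dU j z : N1 <= j -> hfun (d m) j (coord_sum u j z) = c j (hfun (psi p) j z).
  move=> N1j; rewrite hfun_sum (cocycle_decomp z Hc (le_trans nN1 N1j)).
  by apply: eq_bigr => t _; apply: du; left.
have U_cocycle : cocycle_on (im_trunc (psi p.+1) N1) (coord_sum u).
  move=> j _ [[z <-] [N1j | ->]]; last by rewrite (linear_on0 (trunc0 _ N1 j) HU) hfun0.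
  by rewrite dU // (res_comp0 HR) (linear_on0 (im_trunc0 _ _ _) Hc).
have HU' : linear_on (im_trunc (psi p.+1) N1) (coord_sum u).
  by apply: linear_onW HU => j z /im_trunc_sub.
have [N2 N12 U_cob] := syz_ev _ _ _ _ HR p.+1 N1 _ HU' U_cocycle.
have [W HW [W_ker dW]] := kernel_correction HU U_cob.
have HW2 : linear_on (trunc N2) W by apply: linear_onW HW => j z; exact: truncW.
have [v Hv vW] := linear_factor conn (res_gmod HR _) (res_gmod HR _) (HI m) HW2 W_ker.
exists N2; first exact: le_trans nN1 N12.
exists v => // j _ [[z <-] [N2j | ->]]; first by rewrite vW // dW dU // (le_trans N12 N2j).
by rewrite (linear_on0 (im_trunc0 _ _ _) Hv) hfun0 (linear_on0 (im_trunc0 _ _ _) Hc).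
Qed.
End Basis.
End SyzygyStep.

Lemma syzygy_step m lam F (psi : forall p, ghom (F p.+1) (F p)) (eps : ghom (F 0%N) (Smod A lam))
    p n :
  fin_min_free_resolution psi eps ->
  (if m is m'.+1 then syzygies_eventually_coboundary m' else True) ->
  (forall mu, lam < mu -> eA_eventually_coboundary m mu n) ->
  eventually_coboundary m (im_trunc (psi p)) n.
Proof.
move=> HR syz_ev free_ev c; have [B] := finite_free_basis (res_free HR p.+1).
case: m syz_ev free_ev c => [|m] syz_ev free_ev c.
  exact: (syzygy_step0 HR B free_ev).
exact: (syzygy_stepS HR B syz_ev free_ev).
Qed.

Lemma eA_eventually_coboundary_gt m mu n : mu < n ->
  (if m is m'.+1 then syzygies_eventually_coboundary m' else True) ->
  (forall mu', mu < mu' -> eA_eventually_coboundary m mu' n) ->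
  eA_eventually_coboundary m mu n.
Proof.
move=> mun syz_ev free_ev c Hc c_cocycle.
have [F [psi [eps HR]]] := res_exists mu.
have [B] := finite_free_basis (res_free HR 0%N).
set rho := S_lift (res_gmod HR 0%N) B eps.
have [b eps_b] := res_epi HR (A_to_S (Aunit A mu)).
have rho_b : hfun rho mu b = Aunit A mu by rewrite S_liftE // eps_b A_to_SK.
have rho_trunc j x : im_trunc (psi 0%N) n x -> trunc n (hfun rho j x).
  by case=> _ [nj | ->]; [left | right; rewrite hfun0].
have [|N nN c_cob] := syzygy_step (p := 0%N) HR syz_ev free_ev
  (linear_on_comp rho_trunc (ghom_linear_on _ _) Hc).
  by move=> j x Tx; apply: c_cocycle; exact: rho_trunc.
exists N => //.
(* S_mu vanishes above mu, so a |-> b a maps (e_mu A)_(>=N) into ker eps = im psi_0. *)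
apply: (coboundary_on_comp _ (ghom_linear_on (eA_map (res_gmod HR 0%N) b) _) _ c_cob).
  move=> j a [Nj | ->]; last by rewrite hfun0; exact: im_trunc0.
  split; last by left.
  by apply/(res_exact0 HR); apply: Sc_eq0_above (lt_le_trans mun (le_trans nN Nj)).
by move=> j a _; rewrite [hfun (eA_map _ _) j a]/= hfun_act rho_b /= (Amul1l (i := mu)).
Qed.

Lemma eventually_exact_step m :
  (if m is m'.+1 then syzygies_eventually_coboundary m' else True) ->
  (forall mu n, eA_eventually_coboundary m mu n) /\
  syzygies_eventually_coboundary m.
Proof.
move=> syz_ev; suff free_ev mu n : eA_eventually_coboundary m mu n.
  by split=> // lam F psi eps HR p n; exact: (syzygy_step HR syz_ev).
have dist_ev (s : nat) : forall mu n, n - mu <= s%:Z -> eA_eventually_coboundary m mu n.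
  elim: s => [|s IH] mu' n' dist; have [n'mu' | mu'n'] := leP n' mu';
    try exact: eA_eventually_coboundary_le.
    lia.
  by apply: eA_eventually_coboundary_gt mu'n' syz_ev _ => mu'' mu'mu''; apply: IH; lia.
by apply: (dist_ev `|n - mu|%N); lia.
Qed.

Lemma eventually_exact m :
  (forall mu n, eA_eventually_coboundary m mu n) /\
  syzygies_eventually_coboundary m.
Proof. by elim: m => [|m [_ IH]]; apply: eventually_exact_step. Qed.

Lemma torsion_preimage p i (y : Mc (I p) i) :
  torsion_elt (hfun (d p) i y) ->
  exists2 y' : Mc (I p) i, torsion_elt y' & hfun (d p) i y' = hfun (d p) i y.
Proof.
case=> n0 dy_tors; set c := eA_map (HI p) y.
have c_cocycle : cocycle_on (trunc n0) (hfun c).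
  by move=> j a [n0j | ->]; rewrite ?hfun0 // hfun_act dy_tors.
have [N _ c_cob] := (eventually_exact p).1 i n0 _ (ghom_linear_on c _) c_cocycle.
case: p y dy_tors @c c_cocycle c_cob => [|p] y dy_tors c c_cocycle /= c_cob.
  by exists y => //; exists N => j a Nj; apply: c_cob; left.
case: c_cob => u Hu du.
have [h hu] := injective_extend (eA_gmod A i) (trunc_submod conn N (eA_gmod A i)) Hu (I_inj p).
exists (y - hfun (d p) i (hfun h i (Aunit A i))); last by rewrite hfunB d_comp0 subr0.
exists N => j a Nj.
rewrite (MactBl (HI _)) -!hfun_act [Mact (eA A i) _ _]/= (Amul1l (i := i)) hu; last by left.
by rewrite du; [rewrite subrr | left].
Qed.
End InjectiveResolution.

Lemma ker_d0_torsion (k : fieldType) (A : zalg k) (T : gmodD A) (I : nat -> gmodD A)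
    (d : forall p, ghom (I p) (I p.+1)) (eps : ghom T (I 0%N)) :
  is_torsion T -> exact_at eps (d 0%N) ->
  forall j (x : Mc (I 0%N) j), hfun (d 0%N) j x = 0 -> torsion_elt x.
Proof.
move=> T_tors eps_exact j x /eps_exact [t <-]; have [n0 tn0] := T_tors j t.
by exists n0 => n a n0n; rewrite -hfun_act tn0 // hfun0.
Qed.

Theorem lemma5p10 (k : fieldType) (A : zalg k) (T : gmodD A) :
  right_Ext_finite A -> is_gmod T -> is_torsion T ->
  forall (I : nat -> gmodD A) (d : forall p, ghom (I p) (I p.+1))
         (eps : ghom T (I 0%N)),
    inj_resolution d eps ->
    forall p : nat, Rtau_vanishes d p.
Proof.
move=> [[conn _] res_ex] _ T_tors I d eps [HI [I_inj [_ [eps_exact d_exact]]]] p i x x_tors dx.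
have [y dy] := (d_exact p i x).1 dx; subst x.
have ker_d0_tors := ker_d0_torsion T_tors eps_exact.
have [y' y'_tors dy'] := torsion_preimage conn res_ex HI I_inj d_exact ker_d0_tors x_tors.
by exists y'.
Qed.
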